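(* Assume the lifted model described in the context is well-posed and topologically detectable, with LDG $\mathcal{G}$ and topology $\mathcal{G}_T$. Let $i\ne j$. (1) If $i\in N_{\mathcal{G}_T}(j)$, $i\notin N_{\mathcal{G}_T}(j,2)$, and $\mathbf{B}_j'\Phi_X^{-1}(\omega)\mathbf{B}_i\succeq0$ for all $\omega\in[0,2\pi)$, then for all $\omega\in[0,2\pi)$ $$-\Phi_{E_j}^{-1}(\omega)\mathsf{H}_{ji}(\omega)-\mathsf{H}_{ij}(\omega)^*\Phi_{E_i}^{-1}(\omega)\succeq0.$$ (2) If $i\in N_{\mathcal{G}_T}(j)$, $i\in N_{\mathcal{G}_T}(j,2)$, and $\mathbf{B}_j'\Phi_X^{-1}(\omega)\mathbf{B}_i\succeq0$ for all $\omega\in[0,2\pi)$, then for all $\omega\in[0,2\pi)$ $$-\Phi_{E_j}^{-1}(\omega)\mathsf{H}_{ji}(\omega)-\mathsf{H}_{ij}(\omega)^*\Phi_{E_i}^{-1}(\omega)+\sum_{k\in\mathcal{C}_{\mathcal{G}}(j)\cap\mathcal{C}_{\mathcal{G}}(i)} b_{kj}b_{ki}\,G_k(\omega)^*\Phi_{E_k}^{-1}(\omega)G_k(\omega)\succeq0.$$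
   Context: Model: real $b_{ij}\ge0$ for $i\ne j$, $b_{ii}=0$; for each $i$ a stable scalar filter $g_i$ with $z$-transform $1/\mathsf{S}_i(z)$, $\mathsf{S}_i(z)=\sum_{n=1}^{l}a_{n,i}\big(\frac{2(1-z^{-1})}{\Delta t(1+z^{-1})}\big)^n+\sum_{j\ne i}b_{ij}$; $h_{ij}=b_{ij}g_i$. For a scalar filter $f$ its $T$-lifting is the $T\times T$ matrix filter with $(p,t)$ entry $a\mapsto f(aT+p-t)$, $p,t\in\{0,\dots,T-1\}$. Let $G_i$ be the $T$-lifting of $g_i$ and $H_{ij}=b_{ij}G_i$ the $T$-lifting of $h_{ij}$ (so $H_{ii}=\mathbf{0}$), with frequency responses $G_i(\omega)=\sum_a G_i[a]e^{-\mathrm{i}\omega a}$, $\mathsf{H}_{ij}(\omega)=b_{ij}G_i(\omega)$. The lifted processes $X_i$, $E_i$ ($T$-vector valued) satisfy $X_i(k)=\sum_j (H_{ij}*X_j)(k)+E_i(k)$; $E_1,\dots,E_m$ are jointly wide-sense stationary, zero-mean and mutually uncorrelated, with power spectral density matrices $\Phi_{E_i}(\omega)$. Stack $X=[X_1',\dots,X_m']'$, $E=[E_1',\dots,E_m']'$ and let $\mathbb{H}(\omega)$ be the $mT\times mT$ block matrix with $(i,j)$ block $\mathsf{H}_{ij}(\omega)$. Well-posed: $\mathbb{I}-\mathbb{H}(\omega)$ is invertible for almost every $\omega$ ($\Phi_X(\omega)$ denotes the power spectral density of $X=(\mathbb{I}-\mathbb{H})^{-1}E$). Topologically detectable: $\Phi_{E_j}(\omega)\succ0$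 for all $\omega$, $j$. $\mathbf{B}_j\in\mathbb{R}^{mT\times T}$ has $j$-th $T\times T$ block $I_T$ and other blocks zero. LDG $\mathcal{G}$: directed edge $i\to j$ iff $b_{ji}\ne0$; children $\mathcal{C}_{\mathcal{G}}(j)=\{k:b_{kj}\ne0\}$. Topology $\mathcal{G}_T$: undirected edge $\{i,j\}$ iff $b_{ij}\ne0$ or $b_{ji}\ne0$; $N_{\mathcal{G}_T}(j)$ = neighbors of $j$; $N_{\mathcal{G}_T}(j,2)=\{i:\exists k,\ \{j,k\},\{i,k\}\text{ edges of }\mathcal{G}_T\}$. $A\succeq0$ means $A$ is Hermitian positive semidefinite; $A^*$ is the conjugate transpose. *)

From HB Require Import structures.
From mathcomp Require Import all_boot all_order all_algebra.
Set Implicit Arguments. Unset Strict Implicit. Unset Printing Implicit Defensive.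
Import Order.TTheory GRing.Theory Num.Theory.
Local Open Scope ring_scope.

Section Defs.
Variable C : numClosedFieldType.

Definition ctr (p q : nat) (A : 'M[C]_(p, q)) : 'M[C]_(q, p) := map_mx Num.conj (A^T).

Definition psd (n : nat) (A : 'M[C]_n) : Prop :=
  ctr A = A /\ forall v : 'cV[C]_n, 0 <= (ctr v *m A *m v) 0 0.

Definition pd (n : nat) (A : 'M[C]_n) : Prop :=
  ctr A = A /\ forall v : 'cV[C]_n, v != 0 -> 0 < (ctr v *m A *m v) 0 0.

Variables (m T : nat).

Definition Hblk (b : 'I_m -> 'I_m -> C) (G : 'I_m -> 'M[C]_T) (i j : 'I_m) : 'M[C]_T :=
  b i j *: G i.

Definition bigH (b : 'I_m -> 'I_m -> C) (G : 'I_m -> 'M[C]_T)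
  : 'M[C]_(\sum_(i < m) T) := @mxblock C m m (fun _ => T) (fun _ => T) (fun i j => Hblk b G i j).

(* block-diagonal PSD of the stacked noise E (E_i mutually uncorrelated) *)
Definition PhiE_big (PhiE : 'I_m -> 'M[C]_T) : 'M[C]_(\sum_(i < m) T) :=
  @mxdiag C m (fun _ => T) PhiE.

(* PSD of X = (I - H)^{-1} E : Phi_X = (I-H)^{-1} Phi_E (I-H)^{-*} *)
Definition PhiX (b : 'I_m -> 'I_m -> C) (G : 'I_m -> 'M[C]_T) (PhiE : 'I_m -> 'M[C]_T)
  : 'M[C]_(\sum_(i < m) T) :=
  let R := invmx (1%:M - bigH b G) in R *m PhiE_big PhiE *m ctr R.

Definition Bsel (j : 'I_m) : 'M[C]_(\sum_(i < m) T, T) :=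
  @mxcol C m (fun _ => T) T (fun k => if k == j then (1%:M : 'M[C]_T) else 0).

(* topology G_T: undirected edge {i,j} iff b_ij <> 0 or b_ji <> 0 *)
Definition tedge (b : 'I_m -> 'I_m -> C) (i j : 'I_m) : Prop := b i j != 0 \/ b j i != 0.
Definition inN (b : 'I_m -> 'I_m -> C) (j i : 'I_m) : Prop := tedge b j i.
Definition inN2 (b : 'I_m -> 'I_m -> C) (j i : 'I_m) : Prop :=
  exists k, tedge b j k /\ tedge b i k.
Definition children (b : 'I_m -> 'I_m -> C) (j : 'I_m) : pred 'I_m := fun k => b k j != 0.

End Defs.
Arguments Bsel C {m T} j.

From HB Require Import structures.
From mathcomp Require Import all_boot all_order all_algebra.
Import Order.TTheory GRing.Theory Num.Theory.
Set Implicit Arguments. Unset Strict Implicit. Unset Printing Implicit Defensive.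
Local Open Scope ring_scope.

(* Since X = (I - H)^{-1} E, we have Phi_X = (I-H)^{-1} Phi_E (I-H)^{-*}, hence
   Phi_X^{-1} = (I-H)^* Phi_E^{-1} (I-H), where Phi_E is block diagonal because
   the E_k are mutually uncorrelated.  Reading off the (j,i) block (i <> j):
     B_j' Phi_X^{-1} B_i = sum_k (delta_kj - H_kj)^* Phi_{E_k}^{-1} (delta_ki - H_ki)
       = - Phi_{E_j}^{-1} H_ji - H_ij^* Phi_{E_i}^{-1}
         + sum_k b_kj b_ki G_k^* Phi_{E_k}^{-1} G_k,
   using b_kk = 0 and that the b's are real.  The k-th summand vanishes unless
   k is a common child of i and j, and a common child is a common neighbour,
   so in case (1) the sum is empty and in case (2) it is the displayed one. *)

Section BlockAlgebra.
Variable C : numClosedFieldType.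

Lemma ctrM p q r (A : 'M[C]_(p, q)) (B : 'M[C]_(q, r)) : ctr (A *m B) = ctr B *m ctr A.
Proof. by rewrite /ctr trmx_mul map_mxM. Qed.

Lemma ctrK p q (A : 'M[C]_(p, q)) : ctr (ctr A) = A.
Proof. by apply/matrixP => s t; rewrite !mxE conjCK. Qed.

Lemma ctr1 n : ctr (1%:M : 'M[C]_n) = 1%:M.
Proof. by rewrite /ctr trmx1 map_mx1. Qed.

Lemma ctr0 p q : ctr (0 : 'M[C]_(p, q)) = 0.
Proof. by apply/matrixP => s t; rewrite !mxE rmorph0. Qed.

Lemma ctrB p q (A B : 'M[C]_(p, q)) : ctr (A - B) = ctr A - ctr B.
Proof. by apply/matrixP => s t; rewrite !mxE rmorphB. Qed.

Lemma ctrZ p q (a : C) (A : 'M[C]_(p, q)) : ctr (a *: A) = a^* *: ctr A.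
Proof. by apply/matrixP => s t; rewrite !mxE rmorphM. Qed.

Lemma invmx_uniq n (A B : 'M[C]_n) : A *m B = 1%:M -> invmx A = B.
Proof.
move=> AB; have [uA _] := mulmx1_unit AB.
by rewrite -[invmx A]mulmx1 -AB mulmxA mulVmx // mul1mx.
Qed.

Lemma pd_unit n (A : 'M[C]_n) : pd A -> A \in unitmx.
Proof.
move=> [_ posA]; rewrite unitmxE unitfE; apply/negP => /det0P [v v_neq0 vA0].
have cv_neq0 : ctr v != 0.
  by apply: contra v_neq0 => /eqP cv0; rewrite -(ctrK v) cv0 ctr0.
by have := posA _ cv_neq0; rewrite ctrK vA0 mul0mx mxE ltxx.
Qed.

Lemma invmx_congruence n (M D : 'M[C]_n) :
  M \in unitmx -> D \in unitmx ->
  invmx (invmx M *m D *m ctr (invmx M)) = ctr M *m invmx D *m M.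
Proof.
move=> uM uD; apply: invmx_uniq.
have ctrVK : ctr (invmx M) *m ctr M = 1%:M by rewrite -ctrM mulmxV // ctr1.
rewrite -!mulmxA (mulmxA (ctr (invmx M))) ctrVK mul1mx (mulmxA D).
by rewrite mulmxV // mul1mx mulVmx.
Qed.

Variables (m T : nat).
Notation blk := (@mxblock C m m (fun _ => T) (fun _ => T)).
Notation dg := (@mxdiag C m (fun _ => T)).

Lemma Bsel_block (B_ : 'I_m -> 'I_m -> 'M[C]_T) j i :
  (Bsel C j)^T *m blk B_ *m Bsel C i = B_ j i.
Proof.
rewrite /Bsel tr_mxcol mul_mxrow_mxblock mul_mxrow_mxcol.
rewrite (bigD1 i) //= [X in _ + X]big1 ?addr0 => [|l]; last first.
  by move=> /negPf ->; rewrite mulmx0.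
rewrite eqxx mulmx1 (bigD1 j) //= big1 ?addr0 => [|k]; last first.
  by move=> /negPf ->; rewrite trmx0 mul0mx.
by rewrite eqxx trmx1 mul1mx.
Qed.

Lemma one_mxblock :
  (1%:M : 'M[C]_(\sum_(k < m) T)) = blk (fun k l => if k == l then 1%:M else 0).
Proof.
rewrite -(mxdiagZ (p_ := fun _ : 'I_m => T) (1 : C)) /mxdiag.
by apply: eq_mxblock => k l; rewrite conform_mx_id.
Qed.

Lemma ctr_mxblock (A_ : 'I_m -> 'I_m -> 'M[C]_T) :
  ctr (blk A_) = blk (fun k l => ctr (A_ l k)).
Proof. by apply/matrixP => s t; rewrite !mxE. Qed.

Lemma invmx_mxdiag (D_ : 'I_m -> 'M[C]_T) :
  (forall k, D_ k \in unitmx) ->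
  dg D_ \in unitmx /\ invmx (dg D_) = dg (fun k => invmx (D_ k)).
Proof.
move=> uD; have DV1 : dg D_ *m dg (fun k => invmx (D_ k)) = 1%:M.
  rewrite {2}/mxdiag mul_mxdiag_mxblock -[RHS](mxdiagZ (p_ := fun _ : 'I_m => T)).
  rewrite /mxdiag; apply: eq_mxblock => k l.
  case: (eqVneq k l) => [_|_]; last by rewrite mulmx0.
  by rewrite !conform_mx_id mulmxV.
by split; [case: (mulmx1_unit DV1) | apply: invmx_uniq].
Qed.

Lemma Bsel_congruence (A_ : 'I_m -> 'I_m -> 'M[C]_T) (D_ : 'I_m -> 'M[C]_T) j i :
  (Bsel C j)^T *m (ctr (blk A_) *m dg D_ *m blk A_) *m Bsel C i =
  \sum_(q < m) ctr (A_ q j) *m D_ q *m A_ q i.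
Proof.
by rewrite ctr_mxblock mul_mxblock_mxdiag mul_mxblock Bsel_block.
Qed.

End BlockAlgebra.

Section InversePSD.
Variables (C : numClosedFieldType) (m T : nat).
Variables (b : 'I_m -> 'I_m -> C) (G : 'I_m -> 'M[C]_T).
Hypothesis b_nonneg : forall i j, 0 <= b i j.
Hypothesis b_diag : forall i, b i i = 0.

Definition IminusH_blk (k l : 'I_m) : 'M[C]_T :=
  (if k == l then 1%:M else 0) - Hblk b G k l.

Lemma IminusH_mxblock :
  1%:M - bigH b G = @mxblock C m m (fun _ => T) (fun _ => T) IminusH_blk.
Proof. by rewrite one_mxblock /bigH -mxblockB. Qed.

(* The q-th summand of the (j,i) block of (I-H)^* P (I-H), P block diagonal:
   the block delta_qj I - H_qj is I for q = j and -b_qj G_q otherwise (as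
   b_jj = 0), so cross terms appear only for q = j and q = i, and the
   quadratic term is b_qj b_qi G_q^* P_q G_q because the b's are real. *)
Lemma IminusH_congruence_term (P : 'I_m -> 'M[C]_T) (i j q : 'I_m) : i != j ->
  ctr (IminusH_blk q j) *m P q *m IminusH_blk q i =
    (if q == j then - (b j i *: (P j *m G j)) else 0)
  + (if q == i then - (b i j *: (ctr (G i) *m P i)) else 0)
  + (b q j * b q i) *: (ctr (G q) *m P q *m G q).
Proof.
move=> hij; rewrite /IminusH_blk /Hblk.
case: (eqVneq q j) => [->|_].
  rewrite eq_sym (negbTE hij) b_diag scale0r subr0 ctr1 mul1mx mul0r scale0r.
  by rewrite !addr0 sub0r mulmxN -scalemxAr.
rewrite ctrB ctr0 ctrZ geC0_conj //.
case: (eqVneq q i) => [->|_].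
  rewrite b_diag scale0r subr0 mulmx1 mulr0 scale0r addr0 add0r sub0r.
  by rewrite mulNmx -scalemxAl.
rewrite !sub0r !add0r !mulNmx mulmxN opprK.
by rewrite -!scalemxAl -scalemxAr scalerA.
Qed.

Lemma PhiX_inv_block (PhiE : 'I_m -> 'M[C]_T) (i j : 'I_m) :
  (1%:M - bigH b G) \in unitmx -> (forall k, pd (PhiE k)) -> i != j ->
  (Bsel C j)^T *m invmx (PhiX b G PhiE) *m Bsel C i =
  - (invmx (PhiE j) *m Hblk b G j i) - ctr (Hblk b G i j) *m invmx (PhiE i)
  + \sum_(k < m) (b k j * b k i) *: (ctr (G k) *m invmx (PhiE k) *m G k).
Proof.
move=> well_posed pdE hij.
have [uE invE] := invmx_mxdiag (fun k => pd_unit (pdE k)).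
rewrite /PhiX IminusH_mxblock in well_posed *.
rewrite invmx_congruence // invE Bsel_congruence.
rewrite (eq_bigr _ (fun q _ => @IminusH_congruence_term (fun k => invmx (PhiE k)) i j q hij)).
rewrite !big_split /= -!big_mkcond !big_pred1_eq.
by rewrite /Hblk ctrZ geC0_conj // -scalemxAr -scalemxAl.
Qed.

End InversePSD.

Section CommonChildren.
Variables (C : numClosedFieldType) (m : nat) (b : 'I_m -> 'I_m -> C).

Lemma sum_over_common_children (V : lmodType C) (F : 'I_m -> V) (i j : 'I_m) :
  \sum_(k < m) (b k j * b k i) *: F k =
  \sum_(k < m | (k \in children b j) && (k \in children b i)) (b k j * b k i) *: F k.
Proof.
rewrite [RHS]big_mkcond; apply: eq_bigr => k _; rewrite !unfold_in /=.
case: (eqVneq (b k j) 0) => [->|_]; first by rewrite mul0r scale0r.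
by case: (eqVneq (b k i) 0) => [->|_]; first by rewrite mulr0 scale0r.
Qed.

Lemma common_child_inN2 (i j k : 'I_m) :
  k \in children b j -> k \in children b i -> inN2 b j i.
Proof. by rewrite !unfold_in => kj ki; exists k; split; right. Qed.

End CommonChildren.

Theorem theorem3p2
  (C : numClosedFieldType) (m T : nat) (Omega : Type)
  (b : 'I_m -> 'I_m -> C)
  (G : 'I_m -> Omega -> 'M[C]_T)          (* frequency responses G_k(w) of the T-liftings *)
  (PhiE : 'I_m -> Omega -> 'M[C]_T)       (* PSDs Phi_{E_k}(w) *)
  (b_nonneg : forall i j, 0 <= b i j)
  (b_diag : forall i, b i i = 0)
  (well_posed : forall w, (1%:M - bigH b (fun k => G k w)) \in unitmx)
  (detectable : forall j w, pd (PhiE j w))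
  (i j : 'I_m) (hij : i != j) :
  let H k l w := Hblk b (fun k => G k w) k l in
  let PhiXinv w := invmx (PhiX b (fun k => G k w) (fun k => PhiE k w)) in
  let core w := - (invmx (PhiE j w) *m H j i w) - ctr (H i j w) *m invmx (PhiE i w) in
  ((inN b j i -> ~ inN2 b j i ->
    (forall w, psd ((Bsel C j)^T *m PhiXinv w *m Bsel C i)) ->
    forall w, psd (core w))
  /\
   (inN b j i -> inN2 b j i ->
    (forall w, psd ((Bsel C j)^T *m PhiXinv w *m Bsel C i)) ->
    forall w, psd (core w +
       \sum_(k < m | (k \in children b j) && (k \in children b i))
          (b k j * b k i) *: (ctr (G k w) *m invmx (PhiE k w) *m G k w)))).
Proof.
move=> H PhiXinv core.
have block w : (Bsel C j)^T *m PhiXinv w *m Bsel C i = core w +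
    \sum_(k < m | (k \in children b j) && (k \in children b i))
      (b k j * b k i) *: (ctr (G k w) *m invmx (PhiE k w) *m G k w).
  by rewrite /PhiXinv /core /H PhiX_inv_block // sum_over_common_children.
split=> _ hN2 hB w; have := hB w; rewrite block //.
(* Without a common neighbour there is no common child: the sum is empty. *)
rewrite big_pred0 ?addr0 // => k; apply/negP => /andP [kj ki].
exact: hN2 (common_child_inN2 kj ki).
Qed.
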